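(* Let $d\ge0$ and $a$ be integers and $r=-(a+d)$. The substitution $H(t)\mapsto \varphi(x):=x^dH(1-x)$ is a linear isomorphism from the space of formal Laurent series $H(t)$ over $\mathbb{K}$ around $t=1$ of pole order at most $d$ satisfying $H(t^{-1})=(-1)^dt^{-a}H(t)$ onto $\mathcal{F}_r$. Moreover, with respect to the Cauchy product of formal power series, $\mathcal{F}_r\cdot\mathcal{F}_s\subseteq\mathcal{F}_{r+s}$ for all $r,s\in\mathbb{Z}$ and $1\in\mathcal{F}_0$, so that $\mathcal{F}=\bigoplus_{r\in\mathbb{Z}}\mathcal{F}_r$ is a $\mathbb{Z}$-graded algebra.
   Context: $\mathbb{K}$ is one of $\mathbb{Q},\mathbb{R},\mathbb{C}$. For $r\in\mathbb{Z}$, $\mathcal{F}_r$ is the space of formal power series $\varphi(x)\in\mathbb{K}[[x]]$ satisfying $\varphi(x/(x-1))=(1-x)^r\varphi(x)$ (the composition is well defined since $x/(x-1)=-x-x^2-\cdots$ has zero constant term). $\mathcal{F}=\bigoplus_{r}\mathcal{F}_r$ is the $\mathbb{Z}$-graded vector space with homogeneous components $\mathcal{F}_r$, the product of homogeneous elements being the Cauchy product. The functional equation $H(t^{-1})=(-1)^dt^{-a}H(t)$ is understood as an identity of formal Laurent series in $u=1-t$ (with $t^{-1}=\sum_{j\ge0}u^j$, $1-t^{-1}=-u/(1-u)$, $t^{-a}=(1-u)^{-a}$). *)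

From mathcomp Require Import all_boot all_order all_algebra.
Set Implicit Arguments. Unset Strict Implicit. Unset Printing Implicit Defensive.
Import Order.TTheory GRing.Theory Num.Theory.
Local Open Scope ring_scope.

(* Formal power series over K are coefficient functions nat -> K.
   Formal Laurent series in u = 1 - t are coefficient functions int -> K
   (coefficient of u^k at index k). *)
Section Series.
Variable K : numFieldType.

Definition ps_one : nat -> K := fun n => (n == 0)%:R.

Definition ps_mul (f g : nat -> K) : nat -> K :=
  fun k => \sum_(i < k.+1) f i * g (k - i)%N.

Definition ps_pow (f : nat -> K) (n : nat) : nat -> K := iter n (ps_mul f) ps_one.

(* composition f(g), g with zero constant term: coefficient k only involves
   the powers g^n, n <= k *)
Definition ps_comp (f g : nat -> K) : nat -> K :=
  fun k => \sum_(n < k.+1) f n * ps_pow g n k.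

Definition ps_onemX : nat -> K := fun n => if n == 0%N then 1 else if n == 1%N then -1 else 0.
(* 1/(1 - x) = 1 + x + x^2 + ... *)
Definition ps_geom : nat -> K := fun _ => 1.
Definition ps_onemXz (r : int) : nat -> K :=
  match r with
  | Posz n => ps_pow ps_onemX n
  | Negz n => ps_pow ps_geom n.+1
  end.
(* x/(x-1) = -x - x^2 - ... *)
Definition ps_xdivxm1 : nat -> K := fun n => if n == 0%N then 0 else -1.

Definition inF (r : int) (phi : nat -> K) : Prop :=
  forall n, ps_comp phi ps_xdivxm1 n = ps_mul (ps_onemXz r) phi n.

Definition pole_le (d : nat) (H : int -> K) : Prop :=
  forall k : int, k < - d%:Z -> H k = 0.

(* coefficient of u^k in (1 - t^{-1})^m = (-u/(1-u))^m = (-1)^m u^m (1-u)^{-m} *)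
Definition wpow (m k : int) : K :=
  if (m <= k)%R then (-1) ^ m * ps_onemXz (- m) (absz (k - m)) else 0.

(* coefficient of u^k in H(t^{-1}) = sum_m H_m (1 - t^{-1})^m, for H of pole order <= d *)
Definition laurent_inv_t (d : nat) (H : int -> K) (k : int) : K :=
  \sum_(n < (absz (k + d%:Z)).+1) H (n%:Z - d%:Z) * wpow (n%:Z - d%:Z) k.

(* coefficient of u^k in (-1)^d t^{-a} H(t) = (-1)^d (1-u)^{-a} H, for H of pole order <= d *)
Definition laurent_rhs (d : nat) (a : int) (H : int -> K) (k : int) : K :=
  (-1) ^+ d * \sum_(n < (absz (k + d%:Z)).+1)
     (let m : int := (n%:Z - d%:Z)%R in
      H m * (if (m <= k)%R then ps_onemXz (- a) (absz (k - m)%R) else 0)).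

Definition inLS (d : nat) (a : int) (H : int -> K) : Prop :=
  pole_le d H /\ forall k, laurent_inv_t d H k = laurent_rhs d a H k.

(* phi(x) = x^d H(1-x): with t = 1 - x we have u = x *)
Definition phi_of (d : nat) (H : int -> K) : nat -> K :=
  fun m => H (m%:Z - d%:Z).

End Series.

From mathcomp Require Import all_boot all_order all_algebra.
From mathcomp Require Import ring zify.
Set Implicit Arguments. Unset Strict Implicit. Unset Printing Implicit Defensive.
Import Order.TTheory GRing.Theory Num.Theory.
Local Open Scope ring_scope.

(* Everything is checked on truncations: [ps_trunc N] maps power series to
   K[X]/(X^N) compatibly with products, powers and composition with a series
   without constant term.  Modulo X^N the geometric series is a polynomial G
   with (1 - X) G = 1, so (1-x)^r is represented by (1-X)^p G^q for any
   p - q = r; hence r |-> (1-x)^r is multiplicative, and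
   (1-x)^r (x/(x-1))^n = (-1)^n x^n (1-x)^(r-n).  Read in u = 1 - t, the
   functional equation of H becomes (1-x)^d phi(x/(x-1)) = (1-x)^(-a) phi for
   phi = x^d H(1-x), which is equivalent to phi(x/(x-1)) = (1-x)^(-a-d) phi. *)

Section ModXn.
Variable F : fieldType.
Implicit Types (d u v A B C D Q : {poly F}).

Lemma modp_congrM d A B C D :
  A %% d = B %% d -> C %% d = D %% d -> (A * C) %% d = (B * D) %% d.
Proof.
move=> hAB hCD; rewrite -[LHS]modp_mul hCD modp_mul [A * _]mulrC.
by rewrite -[LHS]modp_mul hAB modp_mul mulrC.
Qed.

Lemma modp_mul_mod d A B : ((A %% d) * (B %% d)) %% d = (A * B) %% d.
Proof. exact: modp_congrM (modp_id A d) (modp_id B d). Qed.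

Lemma modp_congrX d A B n : A %% d = B %% d -> (A ^+ n) %% d = (B ^+ n) %% d.
Proof.
by move=> hAB; elim: n => [|n IH]; rewrite ?expr0 // !exprS; apply: modp_congrM.
Qed.

Lemma modp_mul2l d u v A B : (u * v) %% d = 1 %% d ->
  (v * A) %% d = (v * B) %% d <-> A %% d = B %% d.
Proof.
move=> uv; split=> [h|]; last exact: modp_congrM (erefl (v %% d)).
rewrite -(mul1r A) -(mul1r B) -(modp_congrM uv (erefl (A %% d))).
rewrite -(modp_congrM uv (erefl (B %% d))) -!mulrA.
exact: modp_congrM (erefl (u %% d)) h.
Qed.

Lemma coef_modXn N A i : (i < N)%N -> (A %% 'X^N)`_i = A`_i.
Proof. by move=> hi; rewrite -Pdiv.IdomainMonic.take_poly_modp coef_take_poly hi. Qed.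

Lemma modXn_eqP N A B :
  A %% 'X^N = B %% 'X^N <-> forall i, (i < N)%N -> A`_i = B`_i.
Proof.
split=> [hAB i hi | hAB]; first by rewrite -!(coef_modXn A hi) hAB coef_modXn.
by apply/polyP => i; rewrite -!Pdiv.IdomainMonic.take_poly_modp !coef_take_poly; case: ifP => // /hAB.
Qed.

Lemma modXn_comp N A Q : Q`_0 = 0 -> (A \Po Q) %% 'X^N = ((A %% 'X^N) \Po Q) %% 'X^N.
Proof.
move=> Q0; have XQ : 'X %| Q.
  by rewrite -['X]subr0 -polyC0 dvdp_XsubCl /root horner_coef0 Q0.
rewrite {1}(divp_eq A 'X^N) comp_polyD comp_polyM comp_Xn_poly modpD.
by rewrite (modp_eq0 (dvdp_mull _ (dvdp_exp2r N XQ))) add0r.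
Qed.
End ModXn.

Lemma int_subn_surj (r : int) : exists p q : nat, r = p%:Z - q%:Z.
Proof. by case: r => n; [exists n, 0%N | exists 0%N, n.+1]; lia. Qed.

Section Truncation.
Variable K : numFieldType.
Implicit Types (f g phi : nat -> K) (r s : int).

Definition ps_trunc N f : {poly K} := \poly_(i < N) f i.

Lemma coef_ps_trunc N f i : (ps_trunc N f)`_i = if (i < N)%N then f i else 0.
Proof. exact: coef_poly. Qed.

Lemma coef_ps_trunc_lt N f i : (i < N)%N -> (ps_trunc N f)`_i = f i.
Proof. by rewrite coef_ps_trunc => ->. Qed.

Lemma ps_trunc_comp_sum N f (Q : {poly K}) :
  ps_trunc N f \Po Q = \sum_(n < N) f n *: Q ^+ n.
Proof.
rewrite /ps_trunc poly_def linear_sum; apply: eq_bigr => n _.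
by rewrite /= comp_polyZ comp_Xn_poly.
Qed.

Lemma ps_trunc_modXn M N f : (M <= N)%N -> ps_trunc N f %% 'X^M = ps_trunc M f.
Proof.
move=> hMN; apply/polyP => i.
rewrite -Pdiv.IdomainMonic.take_poly_modp coef_take_poly !coef_ps_trunc.
by case: ifP => // hi; rewrite (leq_trans hi hMN).
Qed.

Lemma ps_trunc_eqP f g : (forall N, ps_trunc N f = ps_trunc N g) <-> f =1 g.
Proof.
split=> [h n | h N]; last by apply/polyP => i; rewrite !coef_ps_trunc h.
by have /polyP/(_ n) := h n.+1; rewrite !coef_ps_trunc ltnSn.
Qed.

Lemma ps_trunc_one N : ps_trunc N (@ps_one K) = 1 %% 'X^N.
Proof.
apply/polyP => i; rewrite -Pdiv.IdomainMonic.take_poly_modp coef_take_poly.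
by rewrite coef_ps_trunc coef1.
Qed.

Lemma ps_trunc_mul N f g :
  ps_trunc N (ps_mul f g) = (ps_trunc N f * ps_trunc N g) %% 'X^N.
Proof.
apply/polyP => i; rewrite -Pdiv.IdomainMonic.take_poly_modp coef_take_poly.
rewrite coef_ps_trunc; case: ifP => // hi; rewrite coefM; apply: eq_bigr => j _.
by rewrite !coef_ps_trunc (leq_ltn_trans (leq_ord j) hi) (leq_ltn_trans (leq_subr j i) hi).
Qed.

Lemma ps_trunc_pow N f n : ps_trunc N (ps_pow f n) = (ps_trunc N f ^+ n) %% 'X^N.
Proof.
elim: n => [|n IH]; first by rewrite ps_trunc_one.
by rewrite /ps_pow iterS -/(ps_pow f n) ps_trunc_mul IH modp_mul exprS.
Qed.

Lemma ps_trunc_comp N f g : g 0%N = 0 ->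
  ps_trunc N (ps_comp f g) = (ps_trunc N f \Po ps_trunc N g) %% 'X^N.
Proof.
move=> g0; apply/polyP => i; rewrite -Pdiv.IdomainMonic.take_poly_modp coef_take_poly.
rewrite coef_ps_trunc; case: ifP => // hi.
have Q0 : (ps_trunc N g)`_0 = 0 by rewrite coef_ps_trunc (leq_ltn_trans _ hi).
rewrite -(coef_modXn _ (ltnSn i)) modXn_comp // ps_trunc_modXn // coef_modXn //.
rewrite ps_trunc_comp_sum coef_sum; apply: eq_bigr => n _.
by rewrite coefZ -(coef_modXn _ hi) -ps_trunc_pow coef_ps_trunc_lt.
Qed.

Local Notation geom N := (ps_trunc N (@ps_geom K)).
Local Notation xdivxm1 N := (ps_trunc N (@ps_xdivxm1 K)).

Lemma ps_trunc_onemX N : ps_trunc N (@ps_onemX K) = (1 - 'X) %% 'X^N.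
Proof.
apply/polyP => i; rewrite -Pdiv.IdomainMonic.take_poly_modp coef_take_poly.
rewrite coef_ps_trunc coefB coef1 coefX /ps_onemX.
by case: ifP => // _; case: i => [|[|i]] /=; rewrite ?subr0 ?sub0r ?subrr.
Qed.

Lemma onemX_mul_geom N : ((1 - 'X) * geom N) %% 'X^N = 1 %% 'X^N.
Proof.
apply/modXn_eqP => i hi; rewrite mulrBl mul1r coefB coefXM coef1 !coef_ps_trunc hi.
by case: i hi => [|i] hi /=; rewrite ?subr0 // (ltnW hi) subrr.
Qed.

Lemma xdivxm1_modXn N : xdivxm1 N %% 'X^N = (- ('X * geom N)) %% 'X^N.
Proof.
apply/modXn_eqP => i hi; rewrite coefN coefXM coef_ps_trunc hi /ps_xdivxm1.
by case: i hi => [|i] hi /=; rewrite ?oppr0 // coef_ps_trunc (ltnW hi).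
Qed.

Lemma coef0_xdivxm1 N : (xdivxm1 N)`_0 = 0.
Proof. by rewrite coef_ps_trunc; case: ifP. Qed.

Lemma ps_trunc_onemXz_subn N (p q : nat) :
  ps_trunc N (@ps_onemXz K (p%:Z - q%:Z)) = ((1 - 'X) ^+ p * geom N ^+ q) %% 'X^N.
Proof.
have cancel k : (((1 - 'X) * geom N) ^+ k) %% 'X^N = 1 %% 'X^N.
  by rewrite (modp_congrX k (onemX_mul_geom N)) expr1n.
case: (leqP q p) => hqp.
- have -> : p%:Z - q%:Z = (p - q)%N by rewrite subzn.
  rewrite /= ps_trunc_pow ps_trunc_onemX (modp_congrX _ (modp_id _ _)).
  rewrite -{2}(subnK hqp) exprD -mulrA -exprMn.
  by rewrite -[in LHS](mulr1 ((1 - 'X) ^+ (p - q))); apply: modp_congrM.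
- have -> : p%:Z - q%:Z = Negz (q - p).-1 by rewrite NegzE prednK ?subn_gt0 //; lia.
  rewrite /ps_onemXz prednK ?subn_gt0 // ps_trunc_pow.
  rewrite -{2}(subnKC (ltnW hqp)) exprD mulrA -exprMn.
  by rewrite -[in LHS](mul1r (geom N ^+ (q - p))); apply: modp_congrM.
Qed.

Lemma ps_trunc_onemXzD N r s : ps_trunc N (@ps_onemXz K (r + s)) =
  (ps_trunc N (@ps_onemXz K r) * ps_trunc N (@ps_onemXz K s)) %% 'X^N.
Proof.
have [p1 [q1 ->]] := int_subn_surj r; have [p2 [q2 ->]] := int_subn_surj s.
have -> : p1%:Z - q1%:Z + (p2%:Z - q2%:Z) = (p1 + p2)%N%:Z - (q1 + q2)%N%:Z by lia.
rewrite !ps_trunc_onemXz_subn modp_mul_mod !exprD.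
by congr (_ %% _); ring.
Qed.

Lemma inF_truncP r phi : inF r phi <-> forall N,
  (ps_trunc N phi \Po xdivxm1 N) %% 'X^N = (ps_trunc N (@ps_onemXz K r) * ps_trunc N phi) %% 'X^N.
Proof.
split=> [h N | h]; last apply/ps_trunc_eqP => N.
  by have := (ps_trunc_eqP _ _).2 h N; rewrite ps_trunc_comp // ps_trunc_mul.
by rewrite ps_trunc_comp // ps_trunc_mul.
Qed.

Lemma inF_mul r s f g : inF r f -> inF s g -> inF (r + s) (ps_mul f g).
Proof.
move=> /inF_truncP hf /inF_truncP hg; apply/inF_truncP => N.
rewrite ps_trunc_mul -modXn_comp ?coef0_xdivxm1 // comp_polyM.
rewrite (modp_congrM (hf N) (hg N)) ps_trunc_onemXzD modp_mul_mod.
by congr (_ %% _); ring.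
Qed.

Lemma inF_one : inF 0 (@ps_one K).
Proof.
apply/inF_truncP => N; rewrite ps_trunc_one -modXn_comp ?coef0_xdivxm1 //.
by rewrite comp_polyC modp_mul_mod mulr1.
Qed.

Lemma ps_mul_onemXz_pow_xdivxm1 r n j :
  ps_mul (@ps_onemXz K r) (ps_pow (@ps_xdivxm1 K) n) j =
  if (j < n)%N then 0 else (-1) ^+ n * ps_onemXz K (r - n%:Z) (j - n).
Proof.
set Tr := ps_trunc j.+1 (@ps_onemXz K r).
rewrite -(coef_ps_trunc_lt _ (ltnSn j)) ps_trunc_mul ps_trunc_pow modp_mul.
rewrite -modp_mul (modp_congrX n (xdivxm1_modXn _)) modp_mul coef_modXn //.
have -> : Tr * (- ('X * geom j.+1)) ^+ n =
    (-1) ^+ n *: ('X^n * (Tr * geom j.+1 ^+ n)).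
  by rewrite -mul_polyC rmorphXn rmorphN1 exprNn exprMn; ring.
rewrite coefZ coefXnM; case: ltnP => hnj; first by rewrite mulr0.
congr (_ * _).
have hjn : (j - n < j.+1)%N by rewrite ltnS leq_subr.
rewrite -(coef_modXn _ hjn) -modp_mul -(mul1r (geom j.+1 ^+ n)) -(expr0 (1 - 'X)).
rewrite -ps_trunc_onemXz_subn -ps_trunc_onemXzD add0r.
by rewrite coef_ps_trunc_lt.
Qed.

Lemma ps_mul_onemXz_comp_xdivxm1 r phi j :
  ps_mul (@ps_onemXz K r) (ps_comp phi (@ps_xdivxm1 K)) j =
  \sum_(n < j.+1) phi n * ((-1) ^+ n * ps_onemXz K (r - n%:Z) (j - n)).
Proof.
rewrite -(coef_ps_trunc_lt _ (ltnSn j)) ps_trunc_mul ps_trunc_comp // modp_mul.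
rewrite coef_modXn // ps_trunc_comp_sum mulr_sumr coef_sum.
apply: eq_bigr => -[n hn] _ /=; rewrite -scalerAr coefZ; congr (_ * _).
rewrite -(coef_modXn _ (ltnSn j)) -modp_mul -ps_trunc_pow -ps_trunc_mul.
by rewrite coef_ps_trunc_lt // ps_mul_onemXz_pow_xdivxm1 ltnNge -ltnS hn.
Qed.

Lemma inF_onemXz_mulP r s phi : inF (r - s) phi <-> forall j,
  ps_mul (@ps_onemXz K s) (ps_comp phi (@ps_xdivxm1 K)) j = ps_mul phi (ps_onemXz K r) j.
Proof.
have Tr N : ps_trunc N (@ps_onemXz K r) =
    (ps_trunc N (ps_onemXz K s) * ps_trunc N (ps_onemXz K (r - s))) %% 'X^N.
  by rewrite -ps_trunc_onemXzD addrC subrK.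
have TsN N : (ps_trunc N (@ps_onemXz K (- s)) * ps_trunc N (ps_onemXz K s)) %% 'X^N = 1 %% 'X^N.
  by rewrite -ps_trunc_onemXzD addNr ps_trunc_one.
have eqT N : ps_trunc N (ps_mul (ps_onemXz K s) (ps_comp phi (@ps_xdivxm1 K))) =
    ps_trunc N (ps_mul phi (ps_onemXz K r)) <->
    (ps_trunc N phi \Po xdivxm1 N) %% 'X^N =
    (ps_trunc N (ps_onemXz K (r - s)) * ps_trunc N phi) %% 'X^N.
  rewrite !ps_trunc_mul ps_trunc_comp // modp_mul Tr modp_mul.
  by rewrite [ps_trunc N phi * _]mulrC -mulrA; apply: modp_mul2l (TsN N).
rewrite inF_truncP; split=> h.
  by apply: (ps_trunc_eqP _ _).1 => N; apply/eqT.
by move=> N; apply/eqT/(ps_trunc_eqP _ _).2.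
Qed.
End Truncation.

Lemma expN1z_subn (K : numFieldType) (n d : nat) :
  (-1 : K) ^ (n%:Z - d%:Z) = (-1) ^+ d * (-1) ^+ n.
Proof.
by rewrite expfzDr ?oppr_eq0 ?oner_eq0 // -exprnN invr_sign mulrC.
Qed.

Section LaurentSeries.
Variables (K : numFieldType) (d : nat) (H : int -> K) (phi : nat -> K).
Hypothesis H_phi : forall n : nat, H (n%:Z - d%:Z) = phi n.

Lemma laurent_inv_t_subd j : laurent_inv_t d H (j%:Z - d%:Z) =
  (-1) ^+ d * ps_mul (ps_onemXz K d) (ps_comp phi (@ps_xdivxm1 K)) j.
Proof.
rewrite ps_mul_onemXz_comp_xdivxm1 /laurent_inv_t subrK /= mulr_sumr.
apply: eq_bigr => -[n hn] _ /=.
rewrite /wpow lerD2r lez_nat -ltnS hn expN1z_subn H_phi.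
have -> : j%:Z - d%:Z - (n%:Z - d%:Z) = (j - n)%N by rewrite -subzn //; lia.
by rewrite opprB /=; ring.
Qed.

Lemma laurent_rhs_subd a j : laurent_rhs d a H (j%:Z - d%:Z) =
  (-1) ^+ d * ps_mul phi (ps_onemXz K (- a)) j.
Proof.
rewrite /laurent_rhs subrK /=; congr (_ * _); apply: eq_bigr => -[n hn] _ /=.
rewrite lerD2r lez_nat -ltnS hn H_phi.
by have -> : j%:Z - d%:Z - (n%:Z - d%:Z) = (j - n)%N by rewrite -subzn //; lia.
Qed.

Lemma laurent_inv_t_lt k : k < - d%:Z -> laurent_inv_t d H k = 0.
Proof.
move=> hk; apply: big1 => n _.
by rewrite /wpow ifF ?mulr0 //; apply/negbTE; rewrite -ltNge; lia.
Qed.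

Lemma laurent_rhs_lt a k : k < - d%:Z -> laurent_rhs d a H k = 0.
Proof.
move=> hk; rewrite /laurent_rhs big1 ?mulr0 // => n _ /=.
by rewrite ifF ?mulr0 //; apply/negbTE; rewrite -ltNge; lia.
Qed.

Lemma laurent_eqP a :
  (forall k, laurent_inv_t d H k = laurent_rhs d a H k) <->
  (forall j, ps_mul (ps_onemXz K d) (ps_comp phi (@ps_xdivxm1 K)) j =
             ps_mul phi (ps_onemXz K (- a)) j).
Proof.
split=> [h j | h k].
  have := h (j%:Z - d%:Z); rewrite laurent_inv_t_subd laurent_rhs_subd.
  by move/(congr1 ( *%R ((-1) ^+ d))); rewrite !signrMK.
have [hk | hk] := ltP k (- d%:Z); first by rewrite laurent_inv_t_lt ?laurent_rhs_lt.
have -> : k = (absz (k + d%:Z))%:Z - d%:Z by lia.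
by rewrite laurent_inv_t_subd laurent_rhs_subd h.
Qed.
End LaurentSeries.

Theorem proposition3p2 (K : numFieldType) :
  (forall (d : nat) (a : int),
     (forall H : int -> K, inLS d a H -> inF (- (a + d%:Z)) (phi_of d H)) /\
     (forall (c : K) (H1 H2 : int -> K) (m : nat),
        phi_of d (fun k => c * H1 k + H2 k) m = c * phi_of d H1 m + phi_of d H2 m) /\
     (forall H1 H2 : int -> K, inLS d a H1 -> inLS d a H2 ->
        (forall m, phi_of d H1 m = phi_of d H2 m) -> forall k, H1 k = H2 k) /\
     (forall f : nat -> K, inF (- (a + d%:Z)) f ->
        exists H : int -> K, inLS d a H /\ forall m, phi_of d H m = f m)) /\
  (forall (r s : int) (f g : nat -> K), inF r f -> inF s g -> inF (r + s) (ps_mul f g)) /\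
  inF 0 (@ps_one K).
Proof.
split; last by split; [exact: inF_mul | exact: inF_one].
move=> d a; split; last split; last split.
- move=> H [_ /(laurent_eqP (fun n => erefl (phi_of d H n)))].
  by rewrite opprD => /inF_onemXz_mulP.
- by [].
- move=> H1 H2 [H1_pole _] [H2_pole _] eq_phi k.
  have [hk | hk] := ltP k (- d%:Z); first by rewrite H1_pole ?H2_pole.
  have -> : k = (absz (k + d%:Z))%:Z - d%:Z by lia.
  exact: eq_phi.
- move=> f; rewrite opprD => /inF_onemXz_mulP f_eq.
  pose H k := if - d%:Z <= k then f (absz (k + d%:Z)) else 0.
  have H_f n : H (n%:Z - d%:Z) = f n by rewrite /H subrK ifT //; lia.
  exists H; split=> //; split; last exact: (laurent_eqP H_f a).2 f_eq.
  by move=> k hk; rewrite /H ifF //; apply/negbTE; rewrite -ltNge.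
Qed.
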